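(* Let $\mathcal{E}\subseteq\mathrm{CL}(\mathbb{R})$ be hereditary. Then there exists $\mathcal{G}\subseteq C(\mathbb{R},\mathbb{R})$ such that $\mathcal{E}$ is the least element of $(\mathcal{K}_\mathcal{G},\subseteq)$.
   Context: $\mathrm{CL}(\mathbb{R})$ denotes the family of all closed subsets of $\mathbb{R}$ and $C(\mathbb{R},\mathbb{R})$ the set of all continuous functions $\mathbb{R}\to\mathbb{R}$. For $\mathcal{G}\subseteq C(\mathbb{R},\mathbb{R})$ let $R_\mathcal{G}=\{(f,E)\in C(\mathbb{R},\mathbb{R})\times\mathrm{CL}(\mathbb{R}):(\exists g\in\mathcal{G})\, f\restriction E=g\restriction E\}$. For $\mathcal{F}\subseteq C(\mathbb{R},\mathbb{R})$ put $E_\mathcal{G}(\mathcal{F})=\{E\in\mathrm{CL}(\mathbb{R}):(\forall f\in\mathcal{F})\,(f,E)\in R_\mathcal{G}\}$, and let $\mathcal{K}_\mathcal{G}=\{E_\mathcal{G}(\mathcal{F}):\mathcal{F}\subseteq C(\mathbb{R},\mathbb{R})\}$, ordered by inclusion (it is a complete lattice). A family $\mathcal{E}\subseteq\mathrm{CL}(\mathbb{R})$ is hereditary if for all $D,E\in\mathrm{CL}(\mathbb{R})$, $D\subseteq E\in\mathcal{E}$ implies $D\in\mathcal{E}$. *)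

From Stdlib Require Import Reals Rtopology.
Open Scope R_scope.

Definition is_C (f : R -> R) : Prop := continuity f.

Definition is_CL (E : R -> Prop) : Prop := closed_set E.

Definition subset (D E : R -> Prop) : Prop := forall x, D x -> E x.

Definition fam_in_C (G : (R -> R) -> Prop) : Prop := forall g, G g -> is_C g.

Definition fam_in_CL (F : (R -> Prop) -> Prop) : Prop := forall E, F E -> is_CL E.

Definition R_G (G : (R -> R) -> Prop) (f : R -> R) (E : R -> Prop) : Prop :=
  is_C f /\ is_CL E /\ exists g, G g /\ forall x, E x -> f x = g x.

Definition E_G (G : (R -> R) -> Prop) (F : (R -> R) -> Prop) (E : R -> Prop) : Prop :=
  is_CL E /\ forall f, F f -> R_G G f E.

Definition fam_eq (A B : (R -> Prop) -> Prop) : Prop :=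
  forall E, is_CL E -> (A E <-> B E).

Definition in_K_G (G : (R -> R) -> Prop) (A : (R -> Prop) -> Prop) : Prop :=
  fam_in_CL A /\ exists F, fam_in_C F /\ fam_eq A (E_G G F).

Definition least_in_K_G (G : (R -> R) -> Prop) (A : (R -> Prop) -> Prop) : Prop :=
  in_K_G G A /\ forall B, in_K_G G B -> forall E, A E -> B E.

Definition hereditary (A : (R -> Prop) -> Prop) : Prop :=
  forall D E, is_CL D -> is_CL E -> subset D E -> A E -> A D.

(* Let (q_n) list the rationals and let w_n = 1/(n+1).  Call the value v forbidden at x if
   x is unlisted and v = 0, or x = q_n and v = w_n; let G be the continuous functions that
   avoid forbidden values off some member D of the family.

   The restriction of a continuous f to a closed D of the family extends to a member of G: on
   each gap of D, interpolate between the values at the ends and add t times a polynomial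
   vanishing there; a generic t dodges the countably many forbidden values at rationals, and
   when f changes sign across the gap the interpolant is made to vanish at a rational point.  Hence every member of
   the family lies in every E_G(F).

   Conversely let E be closed and outside the family.  By heredity E is not contained in any
   member D, so a neighbourhood of some point of E misses D.  There E has an isolated point or,
   by a Baire argument, an unlisted point.  Bumps of height w_n at the first-listed isolated
   points of E give a continuous function taking a forbidden value at every such point, so it
   agrees on E with no function of G.  So the family is E_G(C(R,R)), and it is least. *)

From Stdlib Require Import Reals Rtopology.
From Stdlib Require Import Lra Lia ZArith Cantor.
From Stdlib Require Import Classical ClassicalEpsilon PropExtensionality FunctionalExtensionality.
Open Scope R_scope.

Lemma continuity_pt_eps (f : R -> R) (x : R) :
  continuity_pt f x <->
  forall eps, 0 < eps -> exists d, 0 < d /\ forall y, Rabs (y - x) < d -> Rabs (f y - f x) < eps.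
Proof.
  unfold continuity_pt, continue_in, limit1_in, limit_in, D_x, no_cond; simpl; unfold R_dist.
  split.
  - intros H eps Heps. destruct (H eps Heps) as [d [Hd Hf]]. exists d; split; [lra|].
    intros y Hy. destruct (Req_dec y x) as [->|Hne].
    + rewrite Rminus_diag, Rabs_R0; lra.
    + apply Hf; auto.
  - intros H eps Heps. destruct (H eps Heps) as [d [Hd Hf]]. exists d; split; [lra|].
    intros y [_ Hy]. apply Hf, Hy.
Qed.

Lemma continuity_Rmax_0 : continuity (Rmax 0).
Proof.
  intro y. apply (continuity_pt_locally_ext (fun z => (z + Rabs z) / 2) _ 1); [lra| |reg].
  intros z _. unfold Rmax, Rabs. destruct (Rle_dec 0 z), (Rcase_abs z); lra.
Qed.

Lemma continuity_pt_finite_family (F : nat -> R -> R) (x : R) (N : nat) :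
  (forall n, continuity_pt (F n) x) -> forall eps, 0 < eps ->
  exists d, 0 < d /\ forall n y, (n < N)%nat -> Rabs (y - x) < d -> Rabs (F n y - F n x) < eps.
Proof.
  intros HF eps Heps. induction N as [|N [d [Hd IH]]].
  - exists 1. split; [lra|]. intros; lia.
  - destruct (proj1 (continuity_pt_eps _ _) (HF N) eps Heps) as [d' [Hd' HN]].
    exists (Rmin d d'). split; [now apply Rmin_glb_lt|].
    intros n y Hn Hy. pose proof (Rmin_l d d'); pose proof (Rmin_r d d').
    destruct (Nat.eq_dec n N) as [->|Hne]; [apply HN; lra|apply IH; [lia|lra]].
Qed.

Lemma closed_set_free_ball (D : R -> Prop) (x : R) :
  closed_set D -> ~ D x -> exists d, 0 < d /\ forall z, Rabs (z - x) < d -> ~ D z.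
Proof.
  intros HD Hx. destruct (HD x Hx) as [d Hd]. exists d. split; [apply cond_pos|].
  intros z Hz. exact (Hd z Hz).
Qed.

Lemma closed_set_opp (D : R -> Prop) : closed_set D -> closed_set (fun y => D (- y)).
Proof.
  intros HD x Hx. destruct (closed_set_free_ball D (- x) HD Hx) as [d [Hd Hfree]].
  exists (mkposreal d Hd). intros y Hy. apply Hfree. unfold disc in Hy; simpl in Hy.
  replace (- y - - x) with (- (y - x)) by ring. now rewrite Rabs_Ropp.
Qed.

Definition weight (n : nat) : R := / INR (S n).

Lemma weight_pos (n : nat) : 0 < weight n.
Proof. apply Rinv_0_lt_compat, lt_0_INR. lia. Qed.

Lemma weight_small (eps : R) : 0 < eps -> exists N, forall n, (N <= n)%nat -> weight n < eps.
Proof.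
  intros Heps. destruct (archimed_cor1 eps Heps) as [N [HN HN0]]. exists N. intros n Hn.
  apply Rle_lt_trans with (/ INR N); [|exact HN].
  apply Rinv_le_contravar; [now apply lt_0_INR|apply le_INR; lia].
Qed.

(** * Closed sets without isolated points are uncountable *)

Definition isolated_in (E : R -> Prop) (x : R) : Prop :=
  exists r, 0 < r /\ forall z, E z -> Rabs (z - x) < r -> z = x.

Lemma nested_intervals_point (l r : nat -> R) :
  (forall k, l k <= l (S k)) -> (forall k, r (S k) <= r k) -> (forall k, l k <= r k) ->
  exists y, forall k, l k <= y <= r k.
Proof.
  intros Hl Hr Hlr.
  assert (Hmono : forall j k, (j <= k)%nat -> l j <= l k /\ r k <= r j).
  { intros j k Hjk. induction Hjk as [|k _ IH]; [lra|]. specialize (Hl k); specialize (Hr k). lra. }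
  assert (Hlr' : forall j k, l j <= r k).
  { intros j k. destruct (Hmono j (max j k)), (Hmono k (max j k)); try lia.
    pose proof (Hlr (max j k)). lra. }
  destruct (completeness (fun z => exists k, z = l k)) as [y [Hub Hlub]].
  - exists (r O). intros z [k ->]. apply Hlr'.
  - exists (l O), O. reflexivity.
  - exists y. intros k. split; [apply Hub; now exists k|]. apply Hlub. intros z [j ->]. apply Hlr'.
Qed.

Section NestedIntervals.

Variables (E : R -> Prop) (a b : R).
Hypothesis no_isolated : forall x, E x -> a < x < b ->
  forall r, 0 < r -> exists z, E z /\ z <> x /\ Rabs (z - x) < r.

Definition meets_E (p : R * R) : Prop :=
  a < fst p /\ snd p < b /\ exists c, E c /\ fst p < c < snd p.

Lemma meets_E_shrink (p : R * R) (v eps : R) : meets_E p -> 0 < eps ->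
  exists p', meets_E p' /\ fst p <= fst p' /\ snd p' <= snd p /\
    snd p' - fst p' <= eps /\ (v < fst p' \/ snd p' < v).
Proof.
  destruct p as [l r]. intros (Hal & Hrb & c & Ec & Hc) Heps. simpl in *.
  assert (Hc' : exists c', E c' /\ l < c' < r /\ c' <> v).
  { destruct (Req_dec c v) as [<-|Hne]; [|now exists c].
    destruct (no_isolated c Ec ltac:(lra) (Rmin (c - l) (r - c))) as [z (Ez & Hzc & Hz)].
    { apply Rmin_glb_lt; lra. }
    pose proof (Rmin_l (c - l) (r - c)); pose proof (Rmin_r (c - l) (r - c)).
    apply Rabs_def2 in Hz as [Hz1 Hz2]. exists z. repeat split; auto; lra. }
  destruct Hc' as [c' (Ec' & Hc' & Hne)].
  assert (Hv : 0 < Rabs (c' - v)) by (apply Rabs_pos_lt; lra).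
  assert (Hmin : 0 < Rmin (Rmin (c' - l) (r - c')) (Rmin (Rabs (c' - v)) eps))
    by (repeat apply Rmin_glb_lt; lra).
  remember (Rmin (Rmin (c' - l) (r - c')) (Rmin (Rabs (c' - v)) eps) / 2) as rho eqn:Hrho.
  pose proof (Rmin_l (Rmin (c' - l) (r - c')) (Rmin (Rabs (c' - v)) eps)).
  pose proof (Rmin_r (Rmin (c' - l) (r - c')) (Rmin (Rabs (c' - v)) eps)).
  pose proof (Rmin_l (c' - l) (r - c')); pose proof (Rmin_r (c' - l) (r - c')).
  pose proof (Rmin_l (Rabs (c' - v)) eps); pose proof (Rmin_r (Rabs (c' - v)) eps).
  exists (c' - rho, c' + rho); unfold meets_E; simpl. repeat split; try lra.
  - exists c'. split; [exact Ec'|lra].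
  - unfold Rabs in *. destruct (Rcase_abs (c' - v)); [right|left]; lra.
Qed.

Lemma nested_intervals_avoid (u : nat -> R) (x0 : R) : closed_set E -> E x0 -> a < x0 < b ->
  exists y, E y /\ a < y < b /\ forall n, u n <> y.
Proof.
  intros HE Ex0 Hx0.
  assert (Hstep : forall q : nat * (R * R), exists p', meets_E (snd q) ->
    meets_E p' /\ fst (snd q) <= fst p' /\ snd p' <= snd (snd q) /\
    snd p' - fst p' <= weight (fst q) /\ (u (fst q) < fst p' \/ snd p' < u (fst q))).
  { intros [k p]. destruct (classic (meets_E p)) as [Hp|Hp].
    - destruct (meets_E_shrink p (u k) (weight k) Hp (weight_pos k)) as [p' Hp'].
      exists p'. now intros _.
    - exists p. now intros. }
  destruct (choice _ Hstep) as [step Hstep'].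
  set (I := fix I (k : nat) : R * R :=
         match k with O => ((a + x0) / 2, (x0 + b) / 2) | S k => step (k, I k) end).
  assert (HI : forall k, meets_E (I k)).
  { induction k as [|k IH].
    - repeat split; simpl; try lra. exists x0; simpl; split; [exact Ex0|lra].
    - exact (proj1 (Hstep' (k, I k) IH)). }
  assert (HS : forall k, fst (I k) <= fst (I (S k)) /\ snd (I (S k)) <= snd (I k) /\
                 snd (I (S k)) - fst (I (S k)) <= weight k /\
                 (u k < fst (I (S k)) \/ snd (I (S k)) < u k))
    by (intros k; exact (proj2 (Hstep' (k, I k) (HI k)))).
  destruct (nested_intervals_point (fun k => fst (I k)) (fun k => snd (I k))) as [y Hy].
  { intros k. apply HS. }
  { intros k. apply HS. }
  { intros k. destruct (HI k) as (_ & _ & c & _ & Hc). lra. }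
  exists y. split; [|split].
  - apply NNPP. intros Ey. destruct (closed_set_free_ball E y HE Ey) as [d [Hd Hfree]].
    destruct (weight_small d Hd) as [N HN]. specialize (HN N (le_n N)).
    destruct (HI (S N)) as (_ & _ & c & Ec & Hc). apply (Hfree c); [|exact Ec].
    destruct (HS N) as (_ & _ & Hw & _). destruct (Hy (S N)). apply Rabs_def1; lra.
  - destruct (Hy O) as [Hl0 Hr0]. simpl in Hl0, Hr0. lra.
  - intros k Hk. destruct (HS k) as (_ & _ & _ & Hu). destruct (Hy (S k)). lra.
Qed.

End NestedIntervals.

Lemma closed_has_isolated_or_unlisted (E : R -> Prop) (u : nat -> R) (a b x0 : R) :
  closed_set E -> E x0 -> a < x0 < b ->
  exists x, E x /\ a < x < b /\ (isolated_in E x \/ forall n, u n <> x).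
Proof.
  intros HE Ex0 Hx0.
  destruct (classic (exists x, E x /\ a < x < b /\ isolated_in E x)) as [[x (Ex & Hx & Hiso)]|Hno].
  - exists x. auto.
  - destruct (nested_intervals_avoid E a b) with (u := u) (x0 := x0) as [y (Ey & Hy & Hu)]; auto.
    + intros x Ex Hx r Hr. apply NNPP. intros Hz. apply Hno.
      exists x. split; [exact Ex|split; [exact Hx|]].
      exists r. split; [exact Hr|]. intros z Ez Hzx. apply NNPP. intros Hne. apply Hz. now exists z.
    + exists y. auto.
Qed.

Lemma interval_avoids_seq (u : nat -> R) (a b : R) :
  a < b -> exists t, a < t < b /\ forall n, u n <> t.
Proof.
  intros Hab.
  destruct (closed_has_isolated_or_unlisted (fun _ => True) u a b ((a + b) / 2))
    as [t (_ & Ht & [[r [Hr Hiso]]|Hu])]; auto; try lra.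
  - intros x Hx. contradiction (Hx I).
  - specialize (Hiso (t + r / 2) I). rewrite Rabs_right in Hiso; lra.
  - now exists t.
Qed.

(** * Forbidden values and gap fillers *)

Definition qenum (n : nat) : R :=
  let (i, j) := of_nat n in let (p, q) := of_nat i in (INR p - INR q) / INR (S j).

Lemma IZR_as_INR_diff (k : Z) : IZR k = INR (Z.to_nat k) - INR (Z.to_nat (- k)).
Proof. destruct k as [|p|p]; simpl; rewrite ?INR_IPR; unfold IZR; lra. Qed.

Lemma qenum_dense (a b : R) : a < b -> exists n, a < qenum n < b.
Proof.
  intros Hab. destruct (archimed_cor1 (b - a)) as [N [HN HN0]]; [lra|].
  destruct (archimed (a * INR N)) as [Hk1 Hk2]. set (k := up (a * INR N)) in *.
  exists (to_nat (to_nat (Z.to_nat k, Z.to_nat (- k)), pred N)).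
  unfold qenum. rewrite !cancel_of_to, <- IZR_as_INR_diff, Nat.succ_pred_pos by exact HN0.
  assert (Hpos : 0 < INR N) by (apply lt_0_INR; exact HN0).
  assert (Hinv : INR N * / INR N = 1) by (apply Rinv_r; lra).
  assert (0 < / INR N) by (apply Rinv_0_lt_compat; exact Hpos).
  assert (Hk : IZR k / INR N = a + (IZR k - a * INR N) * / INR N).
  { unfold Rdiv. rewrite Rmult_minus_distr_r, Rmult_assoc, Hinv. ring. }
  rewrite Hk. split; nra.
Qed.

Lemma least_index (x : R) : (exists n, qenum n = x) ->
  exists n, qenum n = x /\ forall m, (m < n)%nat -> qenum m <> x.
Proof.
  intros Hex.
  destruct (Wf_nat.dec_inh_nat_subset_has_unique_least_element (fun n => qenum n = x))
    as [n [[Hn Hleast] _]]; [intros n; apply classic|exact Hex|].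
  exists n. split; [exact Hn|]. intros m Hm Hmx. specialize (Hleast m Hmx). lia.
Qed.

Definition forbidden (x v : R) : Prop :=
  ((forall n, qenum n <> x) /\ v = 0) \/ (exists n, qenum n = x /\ v = weight n).

(* [t] only has to avoid the countably many values [(weight n - P (qenum n)) / Q (qenum n)];
   the sign condition keeps [P + t Q] nonzero at unlisted points for every [t > 0]. *)
Lemma perturbation_avoids_forbidden (I : R -> Prop) (P Q : R -> R) (T : R) : 0 < T ->
  (forall x, I x -> (forall n, qenum n <> x) -> 0 <= P x * Q x /\ Q x <> 0) ->
  (forall x n, I x -> Q x = 0 -> qenum n = x -> P x <> weight n) ->
  exists t, 0 < t < T /\ forall x, I x -> ~ forbidden x (P x + t * Q x).
Proof.
  intros HT Hsign Hzero.
  destruct (interval_avoids_seq (fun n => (weight n - P (qenum n)) / Q (qenum n)) 0 T HT)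
    as [t [Ht Hu]].
  exists t. split; [exact Ht|]. intros x Ix [[Hx Hv]|[n [<- Hv]]].
  - destruct (Hsign x Ix Hx) as [HPQ HQ].
    assert (0 < Q x * Q x) by (apply Rsqr_pos_lt, HQ). nra.
  - destruct (Req_dec (Q (qenum n)) 0) as [HQ|HQ].
    + apply (Hzero _ n Ix HQ eq_refl). rewrite HQ in Hv. lra.
    + apply (Hu n). rewrite <- Hv. field. exact HQ.
Qed.

Definition sgn (v : R) : R := if Rle_dec 0 v then 1 else -1.

Lemma sgn_spec (v : R) : 0 <= sgn v * v /\ sgn v * sgn v = 1 /\ Rabs (sgn v) = 1.
Proof. unfold sgn, Rabs. destruct (Rle_dec 0 v), (Rcase_abs _); repeat split; lra. Qed.

Lemma ray_filler (c v : R) :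
  exists F, continuity F /\ F c = v /\ forall x, x <> c -> ~ forbidden x (F x).
Proof.
  destruct (sgn_spec v) as (Hsv & Hss & _).
  destruct (perturbation_avoids_forbidden (fun x => x <> c) (fun _ => v)
              (fun x => sgn v * Rabs (x - c)) 1) as [t [Ht Hok]]; [lra| | |].
  - intros x Hx _. assert (0 < Rabs (x - c)) by (apply Rabs_pos_lt; lra). split; nra.
  - intros x n Hx HQ. assert (0 < Rabs (x - c)) by (apply Rabs_pos_lt; lra). nra.
  - exists (fun x => v + t * (sgn v * Rabs (x - c))). split; [reg|split; [|exact Hok]].
    rewrite Rminus_diag, Rabs_R0. ring.
Qed.

(* The additive [b - a] in the bound is what makes the glued function continuous where
   small gaps accumulate. *)
Definition fills (a b fa fb : R) (F : R -> R) : Prop :=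
  continuity F /\ F a = fa /\ F b = fb /\
  forall x, a < x < b -> ~ forbidden x (F x) /\
    forall v, Rabs (F x - v) <= Rmax (Rabs (fa - v)) (Rabs (fb - v)) + (b - a).

Lemma Rabs_sub_le_Rmax (p fa fb v : R) :
  Rmin fa fb <= p <= Rmax fa fb -> Rabs (p - v) <= Rmax (Rabs (fa - v)) (Rabs (fb - v)).
Proof.
  unfold Rmin, Rmax. destruct (Rle_dec fa fb), (Rle_dec (Rabs (fa - v)) (Rabs (fb - v)));
    unfold Rabs in *; repeat destruct (Rcase_abs _); lra.
Qed.

Lemma fills_of_perturbation (a b fa fb t : R) (P Q : R -> R) :
  continuity P -> continuity Q -> P a = fa -> P b = fb -> Q a = 0 -> Q b = 0 -> 0 <= t ->
  (forall x, a < x < b -> Rmin fa fb <= P x <= Rmax fa fb /\ t * Rabs (Q x) <= b - a /\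
                          ~ forbidden x (P x + t * Q x)) ->
  fills a b fa fb (fun x => P x + t * Q x).
Proof.
  intros HP HQ HPa HPb HQa HQb Ht Hx. split; [reg; auto|split; [|split]].
  - rewrite HPa, HQa. ring.
  - rewrite HPb, HQb. ring.
  - intros x Hax. destruct (Hx x Hax) as (HPx & HQx & Hok). split; [exact Hok|]. intros v.
    pose proof (Rabs_sub_le_Rmax _ _ _ v HPx) as Hv.
    pose proof (Rabs_triang (P x - v) (t * Q x)) as Htri.
    rewrite Rabs_mult, (Rabs_right t) in Htri by lra.
    replace (P x + t * Q x - v) with (P x - v + t * Q x) by ring. lra.
Qed.

Lemma gap_filler_same_sign (a b fa fb : R) :
  a < b -> 0 <= fa * fb -> exists F, fills a b fa fb F.
Proof.
  intros Hab Hsign.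
  destruct (sgn_spec (fa + fb)) as (Hsf & Hss & Habs). set (s := sgn (fa + fb)) in *.
  assert (Hs : 0 <= s * fa /\ 0 <= s * fb).
  { unfold s, sgn in *. destruct (Rle_dec 0 (fa + fb)); split; nra. }
  assert (Hinv : (b - a) * / (b - a) = 1) by (apply Rinv_r; lra).
  assert (Hinv_pos : 0 < / (b - a)) by (apply Rinv_0_lt_compat; lra).
  set (lam x := (x - a) * / (b - a)).
  assert (Hlam : forall x, a < x < b -> 0 <= lam x <= 1).
  { intros x Hx. split; [apply Rmult_le_pos|rewrite <- Hinv; apply Rmult_le_compat_r]; lra. }
  set (P x := fa + (fb - fa) * lam x).
  set (Q x := s * ((x - a) * (b - x))).
  assert (HQ : forall x, a < x < b -> Q x <> 0).
  { intros x Hx HQx.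
    assert (s * Q x = (x - a) * (b - x)) by (unfold Q; rewrite <- Rmult_assoc, Hss; ring).
    nra. }
  destruct (perturbation_avoids_forbidden (fun x => a < x < b) P Q (/ (b - a)))
    as [t [Ht Hok]]; [exact Hinv_pos| | |].
  - intros x Hx _. specialize (Hlam x Hx). split; [|now apply HQ].
    replace (P x * Q x) with ((s * fa * (1 - lam x) + s * fb * lam x) * ((x - a) * (b - x)))
      by (unfold P, Q; ring).
    apply Rmult_le_pos; nra.
  - intros x n Hx HQx. contradiction (HQ x Hx HQx).
  - exists (fun x => P x + t * Q x).
    apply fills_of_perturbation; try (unfold P, Q, lam; reg); try lra.
    + unfold P, lam. rewrite Rminus_diag. ring.
    + unfold P, lam. rewrite Hinv. ring.
    + unfold Q. ring.
    + unfold Q. ring.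
    + intros x Hx. specialize (Hlam x Hx). split; [|split; [|now apply Hok]].
      * unfold P, Rmin, Rmax. destruct (Rle_dec fa fb); nra.
      * assert (Htb : t * (b - a) <= 1) by nra.
        assert (Hy : (x - a) * (b - x) <= (b - a) * (b - a)) by nra.
        unfold Q. rewrite Rabs_mult, Habs, (Rabs_right ((x - a) * (b - x))), Rmult_1_l by nra.
        apply Rle_trans with (t * (b - a) * (b - a));
          [rewrite Rmult_assoc; apply Rmult_le_compat_l|]; nra.
Qed.

Lemma scaled_between (fa fb mu : R) : fa * fb <= 0 -> 0 <= mu <= 1 ->
  (Rmin fa fb <= fa * mu <= Rmax fa fb) /\ (Rmin fa fb <= fb * mu <= Rmax fa fb).
Proof.
  intros Hab Hmu.
  assert (Hsg : fa <= 0 <= fb \/ fb <= 0 <= fa)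
    by (destruct (Rle_or_lt fa 0), (Rle_or_lt 0 fb); [left|right|right|right]; split; nra).
  unfold Rmin, Rmax. destruct (Rle_dec fa fb), Hsg; split; split; nra.
Qed.

Definition kinked_interp (a r b fa fb : R) (x : R) : R :=
  fa * / (a - r) * ((x - r) - Rabs (x - r)) / 2 + fb * / (b - r) * ((x - r) + Rabs (x - r)) / 2.

Lemma kinked_interp_left (a r b fa fb x : R) :
  a < r < b -> x <= r -> kinked_interp a r b fa fb x = fa * ((x - r) * / (a - r)).
Proof. intros Hr Hx. unfold kinked_interp. rewrite Rabs_left1 by lra. field. split; lra. Qed.

Lemma kinked_interp_right (a r b fa fb x : R) :
  a < r < b -> r <= x -> kinked_interp a r b fa fb x = fb * ((x - r) * / (b - r)).
Proof. intros Hr Hx. unfold kinked_interp. rewrite Rabs_right by lra. field. split; lra. Qed.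

Lemma kinked_interp_between (a r b fa fb x : R) : a < r < b -> fa * fb <= 0 -> a <= x <= b ->
  Rmin fa fb <= kinked_interp a r b fa fb x <= Rmax fa fb.
Proof.
  intros Hr Hsign Hx. destruct (Rle_or_lt x r).
  - rewrite kinked_interp_left by lra. apply scaled_between; [exact Hsign|].
    assert (/ (a - r) < 0) by (apply Rinv_lt_0_compat; lra).
    assert ((a - r) * / (a - r) = 1) by (apply Rinv_r; lra). split; nra.
  - rewrite kinked_interp_right by lra. apply scaled_between; [exact Hsign|].
    assert (0 < / (b - r)) by (apply Rinv_0_lt_compat; lra).
    assert ((b - r) * / (b - r) = 1) by (apply Rinv_r; lra). split; nra.
Qed.

Lemma kinked_interp_sign (a r b fa fb s x : R) : a < r < b -> s * fa <= 0 -> 0 <= s * fb ->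
  0 <= s * kinked_interp a r b fa fb x * (x - r).
Proof.
  intros Hr Hfa Hfb. destruct (Rle_or_lt x r).
  - rewrite kinked_interp_left by lra.
    assert (/ (a - r) < 0) by (apply Rinv_lt_0_compat; lra).
    replace (s * (fa * ((x - r) * / (a - r))) * (x - r))
      with (s * fa * / (a - r) * ((x - r) * (x - r))) by ring.
    apply Rmult_le_pos; nra.
  - rewrite kinked_interp_right by lra.
    assert (0 < / (b - r)) by (apply Rinv_0_lt_compat; lra).
    replace (s * (fb * ((x - r) * / (b - r))) * (x - r))
      with (s * fb * / (b - r) * ((x - r) * (x - r))) by ring.
    apply Rmult_le_pos; nra.
Qed.

(* With end values of opposite signs the interpolant is kinked to vanish at a rational point
   [r]: a zero at an unlisted point would be forbidden. *)
Lemma gap_filler_opposite_sign (a b fa fb : R) :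
  a < b -> fa * fb < 0 -> exists F, fills a b fa fb F.
Proof.
  intros Hab Hsign. destruct (qenum_dense a b Hab) as [k Hk]. set (r := qenum k) in *.
  destruct (sgn_spec fb) as (Hsfb & Hss & Habs). set (s := sgn fb) in *.
  assert (Hsfa : s * fa < 0).
  { assert ((s * fa) * (s * fb) < 0)
      by (replace ((s * fa) * (s * fb)) with ((s * s) * (fa * fb)) by ring; rewrite Hss; lra).
    nra. }
  set (P := kinked_interp a r b fa fb).
  assert (HPr0 : P r = 0) by (unfold P; rewrite kinked_interp_left, Rminus_diag by lra; ring).
  set (Q x := s * ((x - r) * ((x - a) * (b - x)))).
  assert (HQ0 : forall x, a < x < b -> Q x = 0 -> x = r).
  { intros x Hx HQx.
    assert (s * Q x = (x - r) * ((x - a) * (b - x)))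
      by (unfold Q; rewrite <- Rmult_assoc, Hss; ring).
    assert (0 < (x - a) * (b - x)) by nra. nra. }
  assert (Hw : 0 < (b - a) * (b - a)) by nra.
  destruct (perturbation_avoids_forbidden (fun x => a < x < b) P Q (/ ((b - a) * (b - a))))
    as [t [Ht Hok]]; [now apply Rinv_0_lt_compat| | |].
  - intros x Hx Hx_unlisted. assert (Hxr : x <> r) by (intros ->; now apply (Hx_unlisted k)).
    split; [|intros HQx; now apply Hxr, HQ0].
    replace (P x * Q x) with (s * P x * (x - r) * ((x - a) * (b - x))) by (unfold Q; ring).
    apply Rmult_le_pos; [apply kinked_interp_sign; lra|nra].
  - intros x n Hx HQx <-. rewrite (HQ0 _ Hx HQx), HPr0. pose proof (weight_pos n). lra.
  - exists (fun x => P x + t * Q x).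
    apply fills_of_perturbation; try (unfold P, Q, kinked_interp; reg); try lra.
    + unfold P. rewrite kinked_interp_left by lra. field. lra.
    + unfold P. rewrite kinked_interp_right by lra. field. lra.
    + unfold Q. ring.
    + unfold Q. ring.
    + intros x Hx. split; [|split; [|now apply Hok]].
      * apply kinked_interp_between; lra.
      * assert (Hy : (x - a) * (b - x) <= (b - a) * (b - a)) by nra.
        assert (Hxr : Rabs (x - r) <= b - a) by (apply Rabs_le; lra).
        assert (Htb : t * ((b - a) * (b - a)) <= 1).
        { rewrite <- (Rinv_l ((b - a) * (b - a))) by lra. apply Rmult_le_compat_r; lra. }
        unfold Q.
        rewrite Rabs_mult, Habs, Rabs_mult, (Rabs_right ((x - a) * (b - x))), Rmult_1_l by nra.
        apply Rle_trans with (t * ((b - a) * ((b - a) * (b - a)))).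
        -- apply Rmult_le_compat_l; [lra|]. apply Rmult_le_compat; try nra. apply Rabs_pos.
        -- nra.
Qed.

Lemma gap_filler (a b fa fb : R) : a < b -> exists F, fills a b fa fb F.
Proof.
  intros Hab. destruct (Rle_or_lt 0 (fa * fb)).
  - now apply gap_filler_same_sign.
  - now apply gap_filler_opposite_sign.
Qed.

(** * Gaps of a closed set and the extension *)

Definition is_left_end (D : R -> Prop) (x a : R) : Prop :=
  D a /\ a < x /\ forall z, D z -> z < x -> z <= a.

Definition is_right_end (D : R -> Prop) (x b : R) : Prop :=
  D b /\ x < b /\ forall z, D z -> x < z -> b <= z.

Lemma is_left_end_exists (D : R -> Prop) (x c : R) :
  closed_set D -> ~ D x -> D c -> c < x -> exists a, is_left_end D x a.
Proof.
  intros HD Hx Dc Hcx.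
  destruct (completeness (fun z => D z /\ z < x)) as [a [Hub Hlub]].
  - exists x. intros z [_ Hz]. lra.
  - now exists c.
  - assert (Hax : a <= x) by (apply Hlub; intros z [_ Hz]; lra).
    assert (Da : D a).
    { apply NNPP; intros Hna. destruct (closed_set_free_ball D a HD Hna) as [d [Hd Hfree]].
      enough (Hub' : is_upper_bound (fun z => D z /\ z < x) (a - d / 2))
        by (pose proof (Hlub _ Hub'); lra).
      intros z [Dz Hz]. destruct (Rle_or_lt z (a - d / 2)) as [|Hlt]; [assumption|].
      exfalso. apply (Hfree z); [|exact Dz].
      pose proof (Hub z (conj Dz Hz)). apply Rabs_def1; lra. }
    exists a. split; [exact Da|split].
    + destruct (Req_dec a x) as [->|]; [contradiction|lra].
    + intros z Dz Hz. now apply Hub.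
Qed.

Lemma is_right_end_exists (D : R -> Prop) (x c : R) :
  closed_set D -> ~ D x -> D c -> x < c -> exists b, is_right_end D x b.
Proof.
  intros HD Hx Dc Hxc.
  destruct (is_left_end_exists (fun y => D (- y)) (- x) (- c)) as [a (Da & Hax & Hmax)];
    [now apply closed_set_opp|now rewrite Ropp_involutive|now rewrite Ropp_involutive|lra|].
  exists (- a). split; [exact Da|split; [lra|]]. intros z Dz Hz.
  enough (- z <= a) by lra. apply Hmax; [now rewrite Ropp_involutive|lra].
Qed.

Definition choose_opt (P : R -> Prop) : option R :=
  match excluded_middle_informative (exists a, P a) with
  | left H => Some (proj1_sig (constructive_indefinite_description _ H))
  | right _ => None
  end.

Lemma choose_opt_Some (P : R -> Prop) (a : R) : choose_opt P = Some a -> P a.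
Proof.
  unfold choose_opt. destruct (excluded_middle_informative _) as [H|]; [|discriminate].
  intros [= <-]. apply proj2_sig.
Qed.

Lemma choose_opt_None (P : R -> Prop) (a : R) : choose_opt P = None -> ~ P a.
Proof.
  unfold choose_opt. destruct (excluded_middle_informative _) as [|Hno]; [discriminate|].
  intros _ Ha. apply Hno. now exists a.
Qed.

Lemma choose_opt_unique (P : R -> Prop) (a : R) :
  (forall a', P a' -> a' = a) -> P a -> choose_opt P = Some a.
Proof.
  intros Huniq Ha. destruct (choose_opt P) as [a'|] eqn:E.
  - f_equal. apply Huniq. now apply choose_opt_Some.
  - contradiction (choose_opt_None P a E Ha).
Qed.

Lemma choose_opt_ext (P Q : R -> Prop) : (forall a, P a <-> Q a) -> choose_opt P = choose_opt Q.
Proof.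
  intros HPQ. f_equal. apply functional_extensionality. intros a.
  apply propositional_extensionality, HPQ.
Qed.

Definition left_end (D : R -> Prop) (x : R) : option R := choose_opt (is_left_end D x).
Definition right_end (D : R -> Prop) (x : R) : option R := choose_opt (is_right_end D x).

Definition between (oa ob : option R) (x : R) : Prop :=
  match oa with Some a => a < x | None => True end /\
  match ob with Some b => x < b | None => True end.

Lemma between_ends (D : R -> Prop) (x : R) : between (left_end D x) (right_end D x) x.
Proof.
  split.
  - destruct (left_end D x) as [a|] eqn:E; [|exact I].
    now apply choose_opt_Some in E as (_ & ? & _).
  - destruct (right_end D x) as [b|] eqn:E; [|exact I].
    now apply choose_opt_Some in E as (_ & ? & _).
Qed.

Lemma left_end_eq (D : R -> Prop) (x a : R) : is_left_end D x a -> left_end D x = Some a.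
Proof.
  intros Ha. apply choose_opt_unique; [|exact Ha].
  intros a' Ha'. destruct Ha as (Da & Hax & Hmax), Ha' as (Da' & Hax' & Hmax').
  pose proof (Hmax a' Da' Hax'); pose proof (Hmax' a Da Hax). lra.
Qed.

Lemma right_end_eq (D : R -> Prop) (x b : R) : is_right_end D x b -> right_end D x = Some b.
Proof.
  intros Hb. apply choose_opt_unique; [|exact Hb].
  intros b' Hb'. destruct Hb as (Db & Hxb & Hmin), Hb' as (Db' & Hxb' & Hmin').
  pose proof (Hmin b' Db' Hxb'); pose proof (Hmin' b Db Hxb). lra.
Qed.

Lemma left_end_above (D : R -> Prop) (x c : R) : closed_set D -> ~ D x -> D c -> c < x ->
  exists a, left_end D x = Some a /\ c <= a.
Proof.
  intros HD Hx Dc Hcx. destruct (is_left_end_exists D x c HD Hx Dc Hcx) as [a Ha].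
  exists a. split; [now apply left_end_eq|]. destruct Ha as (_ & _ & Hmax). now apply Hmax.
Qed.

Lemma right_end_below (D : R -> Prop) (x c : R) : closed_set D -> ~ D x -> D c -> x < c ->
  exists b, right_end D x = Some b /\ b <= c.
Proof.
  intros HD Hx Dc Hxc. destruct (is_right_end_exists D x c HD Hx Dc Hxc) as [b Hb].
  exists b. split; [now apply right_end_eq|]. destruct Hb as (_ & _ & Hmin). now apply Hmin.
Qed.

Lemma ends_constant_on_free (D : R -> Prop) (c d x y : R) :
  (forall z, c < z < d -> ~ D z) -> c < x < d -> c < y < d ->
  left_end D x = left_end D y /\ right_end D x = right_end D y.
Proof.
  intros Hfree Hx Hy.
  assert (Hside : forall z, D z -> (z < x <-> z < y) /\ (x < z <-> y < z)).
  { intros z Dz. assert (~ (c < z < d)) by (intros Hz; exact (Hfree z Hz Dz)).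
    split; split; intros; apply NNPP; intros; lra. }
  split; apply choose_opt_ext; intros e; unfold is_left_end, is_right_end.
  - split; intros (De & He & Hmax); (split; [exact De|split]);
      try (now apply (Hside e De)); intros z Dz Hz; apply Hmax, (Hside z Dz); auto.
  - split; intros (De & He & Hmin); (split; [exact De|split]);
      try (now apply (Hside e De)); intros z Dz Hz; apply Hmin, (Hside z Dz); auto.
Qed.

Lemma left_end_of_free (D : R -> Prop) (c d x : R) :
  (forall z, c < z < d -> ~ D z) -> D c -> c < x < d -> left_end D x = Some c.
Proof.
  intros Hfree Dc Hx. apply left_end_eq. split; [exact Dc|split; [lra|]].
  intros z Dz Hz. apply Rnot_lt_le. intros Hcz. apply (Hfree z); [lra|exact Dz].
Qed.

Lemma right_end_of_free (D : R -> Prop) (c d x : R) :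
  (forall z, c < z < d -> ~ D z) -> D d -> c < x < d -> right_end D x = Some d.
Proof.
  intros Hfree Dd Hx. apply right_end_eq. split; [exact Dd|split; [lra|]].
  intros z Dz Hz. apply Rnot_lt_le. intros Hzd. apply (Hfree z); [lra|exact Dz].
Qed.

Definition bounded_fill (f : R -> R) (a b : R) : R -> R :=
  epsilon (inhabits (fun _ => 0)) (fills a b (f a) (f b)).

Definition ray_fill (f : R -> R) (c : R) : R -> R :=
  epsilon (inhabits (fun _ => 0))
    (fun F => continuity F /\ F c = f c /\ forall x, x <> c -> ~ forbidden x (F x)).

Definition gap_fill (f : R -> R) (oa ob : option R) : R -> R :=
  match oa, ob with
  | Some a, Some b => bounded_fill f a b
  | Some c, None | None, Some c => ray_fill f c
  | None, None => fun _ => -1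
  end.

Lemma bounded_fill_spec (f : R -> R) (a b : R) :
  a < b -> fills a b (f a) (f b) (bounded_fill f a b).
Proof. intros Hab. unfold bounded_fill. apply epsilon_spec, gap_filler, Hab. Qed.

Lemma ray_fill_spec (f : R -> R) (c : R) :
  continuity (ray_fill f c) /\ ray_fill f c c = f c /\
  forall x, x <> c -> ~ forbidden x (ray_fill f c x).
Proof. unfold ray_fill. apply epsilon_spec, ray_filler. Qed.

Lemma gap_fill_continuous (f : R -> R) (oa ob : option R) (x : R) :
  between oa ob x -> continuity (gap_fill f oa ob).
Proof.
  destruct oa as [a|], ob as [b|]; simpl; intros [Ha Hb].
  - apply (bounded_fill_spec f a b). lra.
  - apply ray_fill_spec.
  - apply ray_fill_spec.
  - reg.
Qed.

Lemma gap_fill_admissible (f : R -> R) (oa ob : option R) (x : R) :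
  between oa ob x -> ~ forbidden x (gap_fill f oa ob x).
Proof.
  destruct oa as [a|], ob as [b|]; simpl; intros [Ha Hb].
  - apply (bounded_fill_spec f a b); lra.
  - apply ray_fill_spec. lra.
  - apply ray_fill_spec. lra.
  - intros [[_ Hv]|[n [_ Hv]]]; [lra|]. pose proof (weight_pos n). lra.
Qed.

Lemma gap_fill_at_left (f : R -> R) (a : R) (ob : option R) (x : R) :
  between (Some a) ob x -> gap_fill f (Some a) ob a = f a.
Proof.
  destruct ob as [b|]; simpl; intros [Ha Hb].
  - apply (bounded_fill_spec f a b). lra.
  - apply ray_fill_spec.
Qed.

Lemma gap_fill_at_right (f : R -> R) (oa : option R) (b : R) (x : R) :
  between oa (Some b) x -> gap_fill f oa (Some b) b = f b.
Proof.
  destruct oa as [a|]; simpl; intros [Ha Hb].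
  - apply (bounded_fill_spec f a b). lra.
  - apply ray_fill_spec.
Qed.

Definition extension (D : R -> Prop) (f : R -> R) (x : R) : R :=
  if excluded_middle_informative (D x) then f x
  else gap_fill f (left_end D x) (right_end D x) x.

Lemma extension_in (D : R -> Prop) (f : R -> R) (x : R) : D x -> extension D f x = f x.
Proof. intros Dx. unfold extension. now destruct (excluded_middle_informative (D x)). Qed.

Lemma extension_out (D : R -> Prop) (f : R -> R) (x : R) :
  ~ D x -> extension D f x = gap_fill f (left_end D x) (right_end D x) x.
Proof. intros Dx. unfold extension. now destruct (excluded_middle_informative (D x)). Qed.

Lemma extension_admissible (D : R -> Prop) (f : R -> R) (x : R) :
  ~ D x -> ~ forbidden x (extension D f x).
Proof. intros Dx. rewrite extension_out by exact Dx. apply gap_fill_admissible, between_ends. Qed.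

Definition right_limit (g : R -> R) (y L : R) : Prop :=
  forall eps, 0 < eps -> exists d, 0 < d /\ forall x, y < x < y + d -> Rabs (g x - L) < eps.

Lemma continuity_pt_of_right_limits (g : R -> R) (y : R) :
  right_limit g y (g y) -> right_limit (fun x => g (- x)) (- y) (g y) -> continuity_pt g y.
Proof.
  intros Hr Hl. apply continuity_pt_eps. intros eps Heps.
  destruct (Hr eps Heps) as [d1 [Hd1 H1]], (Hl eps Heps) as [d2 [Hd2 H2]].
  exists (Rmin d1 d2). split; [now apply Rmin_glb_lt|].
  pose proof (Rmin_l d1 d2); pose proof (Rmin_r d1 d2).
  intros x Hx. apply Rabs_def2 in Hx as [Hx1 Hx2].
  destruct (Rtotal_order x y) as [Hlt|[->|Hgt]].
  - rewrite <- (Ropp_involutive x). apply H2. lra.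
  - rewrite Rminus_diag, Rabs_R0. exact Heps.
  - apply H1. lra.
Qed.

Definition glued (D : R -> Prop) (f g : R -> R) : Prop :=
  (forall x, D x -> g x = f x) /\
  (forall c d x, D c -> D d -> c < x < d -> ~ D x ->
     exists a b, c <= a <= b /\ b <= d /\
       forall v, Rabs (g x - v) <= Rmax (Rabs (f a - v)) (Rabs (f b - v)) + (b - a)) /\
  (forall c d, c < d -> (forall z, c < z < d -> ~ D z) ->
     exists Phi, continuity Phi /\ (D c -> Phi c = f c) /\ (D d -> Phi d = f d) /\
       forall x, c < x < d -> g x = Phi x).

Lemma glued_right_limit (D : R -> Prop) (f g : R -> R) (y : R) :
  continuity f -> glued D f g -> D y -> right_limit g y (f y).
Proof.
  intros Hf (Hon & Hgap & Hfree) Dy eps Heps.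
  destruct (proj1 (continuity_pt_eps f y) (Hf y) (eps / 2)) as [d0 [Hd0 Hfy]]; [lra|].
  pose proof (Rmin_l d0 (eps / 2)); pose proof (Rmin_r d0 (eps / 2)).
  assert (Hdl : 0 < Rmin d0 (eps / 2)) by (apply Rmin_glb_lt; lra).
  set (dl := Rmin d0 (eps / 2)) in *.
  destruct (classic (exists d1, D d1 /\ y < d1 < y + dl)) as [[d1 [Dd1 Hd1]]|Hno].
  - exists (d1 - y). split; [lra|]. intros x Hx.
    destruct (classic (D x)) as [Dx|Dx].
    + rewrite Hon by exact Dx. assert (Rabs (f x - f y) < eps / 2) by (apply Hfy, Rabs_def1; lra).
      lra.
    + destruct (Hgap y d1 x Dy Dd1 ltac:(lra) Dx) as (a & b & Ha & Hb & Hbound).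
      assert (Rabs (f a - f y) < eps / 2) by (apply Hfy, Rabs_def1; lra).
      assert (Rabs (f b - f y) < eps / 2) by (apply Hfy, Rabs_def1; lra).
      pose proof (Rmax_lub_lt _ _ _ H1 H2). specialize (Hbound (f y)). lra.
  - destruct (Hfree y (y + dl)) as (Phi & HPhi & HPhiy & _ & HgPhi); [lra| |].
    { intros z Hz Dz. apply Hno. now exists z. }
    destruct (proj1 (continuity_pt_eps Phi y) (HPhi y) eps Heps) as [d2 [Hd2 HPhi2]].
    exists (Rmin dl d2). split; [now apply Rmin_glb_lt|].
    pose proof (Rmin_l dl d2); pose proof (Rmin_r dl d2).
    intros x Hx. rewrite HgPhi, <- (HPhiy Dy) by lra. apply HPhi2, Rabs_def1; lra.
Qed.

(* Left limits are obtained as right limits of the reflected data. *)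
Lemma glued_opp (D : R -> Prop) (f g : R -> R) :
  glued D f g -> glued (fun y => D (- y)) (fun y => f (- y)) (fun y => g (- y)).
Proof.
  intros (Hon & Hgap & Hfree). split; [|split].
  - intros x Dx. now apply Hon.
  - intros c d x Dc Dd Hx Dx.
    destruct (Hgap (- d) (- c) (- x) Dd Dc ltac:(lra) Dx) as (a & b & Ha & Hb & Hbound).
    exists (- b), (- a). split; [lra|split; [lra|]]. intros v.
    rewrite !Ropp_involutive, Rmax_comm. replace (- a - - b) with (b - a) by ring. apply Hbound.
  - intros c d Hcd Hcd_free.
    destruct (Hfree (- d) (- c)) as (Phi & HPhi & HPhic & HPhid & HgPhi); [lra| |].
    { intros z Hz Dz. apply (Hcd_free (- z)); [lra|now rewrite Ropp_involutive]. }
    exists (fun y => Phi (- y)). split; [|split; [|split]].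
    + apply (continuity_comp Ropp Phi); [reg|exact HPhi].
    + exact HPhid.
    + exact HPhic.
    + intros x Hx. apply HgPhi. lra.
Qed.

Lemma glued_continuous (D : R -> Prop) (f g : R -> R) :
  closed_set D -> continuity f -> glued D f g -> continuity g.
Proof.
  intros HD Hf Hg y. destruct (classic (D y)) as [Dy|Dy].
  - assert (Hgy : g y = f y) by (apply (proj1 Hg), Dy).
    apply continuity_pt_of_right_limits; rewrite Hgy.
    + now apply (glued_right_limit D).
    + replace (f y) with ((fun z => f (- z)) (- y)) by (simpl; now rewrite Ropp_involutive).
      apply (glued_right_limit (fun z => D (- z)) (fun z => f (- z)) (fun z => g (- z)) (- y));
        [|now apply glued_opp|now rewrite Ropp_involutive].
      apply (continuity_comp Ropp f); [reg|exact Hf].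
  - destruct (closed_set_free_ball D y HD Dy) as [d [Hd Hball]].
    destruct (proj2 (proj2 Hg) (y - d) (y + d)) as (Phi & HPhi & _ & _ & HgPhi); [lra| |].
    { intros z Hz. apply Hball, Rabs_def1; lra. }
    apply (continuity_pt_locally_ext Phi g d y Hd); [|apply HPhi].
    intros x Hx. symmetry. apply HgPhi. unfold Rdist in Hx. apply Rabs_def2 in Hx. lra.
Qed.

Lemma extension_glued (D : R -> Prop) (f : R -> R) : closed_set D -> glued D f (extension D f).
Proof.
  intros HD. split; [|split].
  - apply extension_in.
  - intros c d x Dc Dd Hx Dx.
    destruct (left_end_above D x c HD Dx Dc ltac:(lra)) as [a [Ha Hca]].
    destruct (right_end_below D x d HD Dx Dd ltac:(lra)) as [b [Hb Hbd]].
    pose proof (between_ends D x) as Hbetween. rewrite Ha, Hb in Hbetween. destruct Hbetween.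
    exists a, b. split; [lra|split; [exact Hbd|]]. intros v.
    rewrite extension_out, Ha, Hb by exact Dx. apply (bounded_fill_spec f a b); lra.
  - intros c d Hcd Hfree. set (x0 := (c + d) / 2).
    exists (gap_fill f (left_end D x0) (right_end D x0)).
    split; [apply (gap_fill_continuous f _ _ x0), between_ends|split; [|split]].
    + intros Dc. pose proof (between_ends D x0) as Hb.
      rewrite (left_end_of_free D c d x0) in * by (auto; unfold x0; lra).
      exact (gap_fill_at_left f c _ x0 Hb).
    + intros Dd. pose proof (between_ends D x0) as Hb.
      rewrite (right_end_of_free D c d x0) in * by (auto; unfold x0; lra).
      exact (gap_fill_at_right f _ d x0 Hb).
    + intros x Hx. rewrite extension_out by (apply Hfree, Hx).
      destruct (ends_constant_on_free D c d x x0 Hfree Hx) as [-> ->]; [unfold x0; lra|reflexivity].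
Qed.

(** * Test functions *)

(* [qenum] lists every rational infinitely often; only the first index of an isolated
   point carries a bump. *)
Definition first_isolated (E : R -> Prop) (n : nat) : Prop :=
  E (qenum n) /\ isolated_in E (qenum n) /\ forall m, (m < n)%nat -> qenum m <> qenum n.

Definition isolation_radius (E : R -> Prop) (x : R) : R :=
  epsilon (inhabits 1) (fun r => 0 < r /\ forall z, E z -> Rabs (z - x) < r -> z = x).

Lemma isolation_radius_spec (E : R -> Prop) (x : R) : isolated_in E x ->
  0 < isolation_radius E x /\ forall z, E z -> Rabs (z - x) < isolation_radius E x -> z = x.
Proof. intros Hx. unfold isolation_radius. apply epsilon_spec, Hx. Qed.

(* Halving the isolation radius makes bumps at distinct points disjoint. *)
Definition bump_radius (E : R -> Prop) (n : nat) : R := isolation_radius E (qenum n) / 2.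

Definition bump (E : R -> Prop) (n : nat) (x : R) : R :=
  weight n * Rmax 0 (1 - Rabs (x - qenum n) / bump_radius E n).

Definition in_bump (E : R -> Prop) (n : nat) (x : R) : Prop :=
  first_isolated E n /\ Rabs (x - qenum n) < bump_radius E n.

Lemma bump_radius_pos (E : R -> Prop) (n : nat) : first_isolated E n -> 0 < bump_radius E n.
Proof.
  intros (_ & Hiso & _). unfold bump_radius.
  pose proof (proj1 (isolation_radius_spec E _ Hiso)). lra.
Qed.

Lemma in_bump_center (E : R -> Prop) (n : nat) (x : R) : in_bump E n x -> E x -> x = qenum n.
Proof.
  intros [(_ & Hiso & _) Hx] Ex. apply (isolation_radius_spec E _ Hiso); [exact Ex|].
  pose proof (proj1 (isolation_radius_spec E _ Hiso)). unfold bump_radius in Hx. lra.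
Qed.

Lemma in_bump_unique (E : R -> Prop) (n m : nat) (x : R) : in_bump E n x -> in_bump E m x -> n = m.
Proof.
  intros Hn Hm.
  assert (Heq : qenum m = qenum n).
  { pose proof (Rabs_triang (qenum m - x) (x - qenum n)) as Htri.
    replace (qenum m - x + (x - qenum n)) with (qenum m - qenum n) in Htri by ring.
    rewrite (Rabs_minus_sym (qenum m) x) in Htri.
    destruct Hn as [(En & Hison & _) Hxn], Hm as [(Em & Hisom & _) Hxm].
    unfold bump_radius in Hxn, Hxm.
    destruct (Rle_or_lt (isolation_radius E (qenum m)) (isolation_radius E (qenum n))).
    - apply (isolation_radius_spec E _ Hison); [exact Em|lra].
    - symmetry. apply (isolation_radius_spec E _ Hisom); [exact En|].
      rewrite Rabs_minus_sym. lra. }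
  destruct Hn as [(_ & _ & Hminn) _], Hm as [(_ & _ & Hminm) _].
  destruct (lt_eq_lt_dec n m) as [[Hlt|]|Hlt]; [|assumption|].
  - contradiction (Hminm n Hlt (eq_sym Heq)).
  - contradiction (Hminn m Hlt Heq).
Qed.

Lemma bump_bounds (E : R -> Prop) (n : nat) (x : R) :
  first_isolated E n -> 0 <= bump E n x <= weight n.
Proof.
  intros Hn. pose proof (bump_radius_pos E n Hn) as Hr. pose proof (weight_pos n).
  assert (0 <= Rabs (x - qenum n) / bump_radius E n)
    by (apply Rmult_le_pos; [apply Rabs_pos|now apply Rlt_le, Rinv_0_lt_compat]).
  unfold bump, Rmax. destruct (Rle_dec 0 _); nra.
Qed.

Lemma bump_vanishes (E : R -> Prop) (n : nat) (x : R) :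
  first_isolated E n -> ~ in_bump E n x -> bump E n x = 0.
Proof.
  intros Hn Hx. pose proof (bump_radius_pos E n Hn) as Hr.
  assert (Hfar : bump_radius E n <= Rabs (x - qenum n))
    by (apply Rnot_lt_le; intros Hlt; now apply Hx).
  assert (1 <= Rabs (x - qenum n) / bump_radius E n).
  { unfold Rdiv. rewrite <- (Rinv_r (bump_radius E n)) by lra.
    apply Rmult_le_compat_r; [now apply Rlt_le, Rinv_0_lt_compat|exact Hfar]. }
  unfold bump. rewrite Rmax_left by lra. ring.
Qed.

Lemma bump_continuous (E : R -> Prop) (n : nat) : continuity (bump E n).
Proof.
  intros x. apply continuity_pt_mult; [reg|].
  apply (continuity_pt_comp (fun y => 1 - Rabs (y - qenum n) / bump_radius E n) (Rmax 0));
    [reg|apply continuity_Rmax_0].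
Qed.

Definition test_fun (E : R -> Prop) (x : R) : R :=
  match excluded_middle_informative (exists n, in_bump E n x) with
  | left H => bump E (proj1_sig (constructive_indefinite_description _ H)) x
  | right _ => 0
  end.

Lemma test_fun_in (E : R -> Prop) (n : nat) (x : R) : in_bump E n x -> test_fun E x = bump E n x.
Proof.
  intros Hn. unfold test_fun. destruct (excluded_middle_informative _) as [H|H].
  - destruct (constructive_indefinite_description _ H) as [m Hm]; simpl.
    now rewrite (in_bump_unique E m n x Hm Hn).
  - contradiction H. now exists n.
Qed.

Lemma test_fun_out (E : R -> Prop) (x : R) : (forall n, ~ in_bump E n x) -> test_fun E x = 0.
Proof.
  intros Hno. unfold test_fun.
  destruct (excluded_middle_informative _) as [[n Hn]|]; [|reflexivity].
  contradiction (Hno n Hn).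
Qed.

Lemma test_fun_continuous (E : R -> Prop) : continuity (test_fun E).
Proof.
  intros x. destruct (classic (exists n, in_bump E n x)) as [[n [Hn Hx]]|Hno].
  - apply (continuity_pt_locally_ext (bump E n) _ (bump_radius E n - Rabs (x - qenum n)));
      [lra| |apply bump_continuous].
    intros y Hy. symmetry. apply test_fun_in. split; [exact Hn|].
    unfold Rdist in Hy. pose proof (Rabs_triang (y - x) (x - qenum n)).
    replace (y - x + (x - qenum n)) with (y - qenum n) in H by ring. lra.
  - assert (Hno' : forall n, ~ in_bump E n x) by (intros n Hn; apply Hno; now exists n).
    apply continuity_pt_eps. intros eps Heps. rewrite (test_fun_out E x Hno').
    destruct (weight_small eps Heps) as [N HN].
    destruct (continuity_pt_finite_family (bump E) x N (fun n => bump_continuous E n x) eps Heps)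
      as [d [Hd Hnear]].
    exists d. split; [exact Hd|]. intros y Hy. rewrite Rminus_0_r.
    destruct (classic (exists m, in_bump E m y)) as [[m Hm]|Hno_y].
    + rewrite (test_fun_in E m y Hm). destruct (lt_dec m N) as [HmN|HmN].
      * specialize (Hnear m y HmN Hy). now rewrite (bump_vanishes E m x (proj1 Hm) (Hno' m)),
          Rminus_0_r in Hnear.
      * pose proof (bump_bounds E m y (proj1 Hm)). specialize (HN m ltac:(lia)).
        rewrite Rabs_right; lra.
    + rewrite test_fun_out, Rabs_R0 by (intros m Hm; apply Hno_y; now exists m). exact Heps.
Qed.

Lemma test_fun_forbidden (E : R -> Prop) (x : R) :
  E x -> isolated_in E x \/ (forall n, qenum n <> x) -> forbidden x (test_fun E x).
Proof.
  intros Ex Hx. destruct (classic (exists n, qenum n = x)) as [Hlisted|Hunlisted].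
  - destruct Hx as [Hiso|Hunlisted]; [|destruct Hlisted as [n Hn]; contradiction (Hunlisted n Hn)].
    destruct (least_index x Hlisted) as [n [<- Hmin]].
    assert (Hin : in_bump E n (qenum n)).
    { split; [split; [exact Ex|split; [exact Hiso|exact Hmin]]|].
      rewrite Rminus_diag, Rabs_R0. apply bump_radius_pos.
      split; [exact Ex|split; [exact Hiso|exact Hmin]]. }
    right. exists n. split; [reflexivity|]. rewrite (test_fun_in E n _ Hin).
    unfold bump. rewrite Rminus_diag, Rabs_R0. unfold Rdiv. rewrite Rmult_0_l, Rminus_0_r.
    rewrite Rmax_right by lra. ring.
  - left. split; [intros n Hn; apply Hunlisted; now exists n|].
    apply test_fun_out. intros n Hn. apply Hunlisted. exists n. symmetry.
    exact (in_bump_center E n x Hn Ex).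
Qed.

Lemma test_fun_separates (E D : R -> Prop) (g : R -> R) (x0 : R) :
  closed_set E -> closed_set D -> E x0 -> ~ D x0 ->
  (forall x, ~ D x -> ~ forbidden x (g x)) -> exists x, E x /\ g x <> test_fun E x.
Proof.
  intros HE HD Ex0 Dx0 Hg.
  destruct (closed_set_free_ball D x0 HD Dx0) as [d [Hd Hball]].
  destruct (closed_has_isolated_or_unlisted E qenum (x0 - d) (x0 + d) x0 HE Ex0 ltac:(lra))
    as [x (Ex & Hx & Hkind)].
  exists x. split; [exact Ex|]. intros Heq. apply (Hg x).
  - apply Hball, Rabs_def1; lra.
  - rewrite Heq. now apply test_fun_forbidden.
Qed.

Theorem theorem2p5 (Ecal : (R -> Prop) -> Prop) :
  fam_in_CL Ecal -> hereditary Ecal ->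
  exists G : (R -> R) -> Prop, fam_in_C G /\ least_in_K_G G Ecal.
Proof.
  intros HCL Hher.
  set (G g := is_C g /\ exists D, Ecal D /\ forall x, ~ D x -> ~ forbidden x (g x)).
  assert (HR : forall D f, Ecal D -> is_C f -> R_G G f D).
  { intros D f ED Hf. split; [exact Hf|split; [now apply HCL|]].
    exists (extension D f). split; [split|].
    - apply (glued_continuous D f); [now apply HCL|exact Hf|apply extension_glued; now apply HCL].
    - exists D. split; [exact ED|]. apply extension_admissible.
    - intros x Dx. symmetry. now apply extension_in. }
  exists G. split; [now intros g []|split].
  - split; [exact HCL|]. exists is_C. split; [now intros f|].
    intros E HE. split.
    + intros EE. split; [exact HE|]. intros f Hf. now apply HR.
    + intros [_ HEG]. apply NNPP. intros nE.
      destruct (HEG (test_fun E) (test_fun_continuous E))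
        as (_ & _ & g & (_ & D & ED & Hg) & Hagree).
      destruct (classic (exists x0, E x0 /\ ~ D x0)) as [[x0 [Ex0 Dx0]]|Hsub].
      * destruct (test_fun_separates E D g x0 HE (HCL D ED) Ex0 Dx0 Hg) as [x [Ex Hne]].
        apply Hne. symmetry. now apply Hagree.
      * apply nE, (Hher E D HE (HCL D ED)); [|exact ED].
        intros x Ex. apply NNPP. intros Dx. apply Hsub. now exists x.
  - intros B [_ [F [HF Heq]]] E EE. apply (Heq E (HCL E EE)).
    split; [now apply HCL|]. intros f Hf. apply HR; [exact EE|now apply HF].
Qed.
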